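(* Let $(K,\alpha_K)$ be a Hom-Leibniz $n$-algebra with ${}_nHL_0^\alpha(K)={}_nHL_1^\alpha(K)=0$. Then every central extension $0\to(M,\alpha_M)\to(K,\alpha_K)\xrightarrow{\pi}(L,\alpha_L)\to0$ is a universal central extension.
   Context: Fix a field $\mathbb K$ and $n\ge2$. A (multiplicative) Hom-Leibniz $n$-algebra is a $\mathbb K$-vector space $L$ with an $n$-linear bracket and a linear map $\alpha_L$ preserving the bracket, satisfying $[[x_1,\dots,x_n],\alpha_L(y_1),\dots,\alpha_L(y_{n-1})]=\sum_{i=1}^n[\alpha_L(x_1),\dots,[x_i,y_1,\dots,y_{n-1}],\dots,\alpha_L(x_n)]$. Homomorphisms preserve brackets and commute with twisting maps. Center $Z(K)$: elements $x$ with every bracket having $x$ in some position equal to $0$. An extension of $L$ is a surjective homomorphism $\pi:K\to L$ with kernel $M$; central if $M\subseteq Z(K)$; universal central if central and for every central extension $\pi':K'\to L$ there is a unique homomorphism $h:K\to K'$ with $\pi'\circ h=\pi$. Define $\delta_1:K^{\otimes n}\to K$, $\delta_1(x_1\otimes\dots\otimes x_n)=[x_1,\dots,x_n]$, and $\delta_2:K^{\otimes(2n-1)}\to K^{\otimes n}$, $\delta_2(x_1\otimes\dots\otimes x_n\otimes y_1\otimes\dots\otimes y_{n-1})=[x_1,\dots,x_n]\otimes\alpha_K(y_1)\otimes\dots\otimes\alpha_K(y_{n-1})-\sum_{i=1}^n\alpha_K(x_1)\otimes\dots\otimes[x_i,y_1,\dots,y_{n-1}]\otimes\dots\otimes\alpha_K(x_n)$.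 Then ${}_nHL_0^\alpha(K)=K/[K,\dots,K]$ and ${}_nHL_1^\alpha(K)=\ker\delta_1/\operatorname{im}\delta_2$. *)

From HB Require Import structures.
From mathcomp Require Import all_boot all_order all_algebra.
Set Implicit Arguments.
Unset Strict Implicit.
Unset Printing Implicit Defensive.
Import GRing.Theory.
Local Open Scope ring_scope.

Definition upd (V : Type) (m : nat) (x : {ffun 'I_m -> V}) (i : 'I_m) (v : V)
  : {ffun 'I_m -> V} := [ffun j => if j == i then v else x j].

(* (a, y_1, ..., y_{m-1}) as an m-tuple *)
Definition fcons (V : Type) (m : nat) (a : V) (y : {ffun 'I_m.-1 -> V})
  : {ffun 'I_m -> V} :=
  [ffun j : 'I_m => if val j is k.+1 then odflt a (omap y (insub k)) else a].

Definition fmap (U V : Type) (m : nat) (f : U -> V) (x : {ffun 'I_m -> U})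
  : {ffun 'I_m -> V} := [ffun j => f (x j)].

Definition multilinear (F : fieldType) (U V : lmodType F) (m : nat)
  (phi : {ffun 'I_m -> U} -> V) : Prop :=
  forall (x : {ffun 'I_m -> U}) (i : 'I_m) (a : F) (u v : U),
    phi (upd x i (a *: u + v)) = a *: phi (upd x i u) + phi (upd x i v).

Record hlalg (F : fieldType) (n : nat) := HLAlg {
  hl_car :> lmodType F;
  hl_br : {ffun 'I_n -> hl_car} -> hl_car;
  hl_alpha : hl_car -> hl_car;
  hl_alpha_lin : forall (a : F) (u v : hl_car),
      hl_alpha (a *: u + v) = a *: hl_alpha u + hl_alpha v;
  hl_br_lin : multilinear hl_br;
  hl_alpha_br : forall x, hl_alpha (hl_br x) = hl_br (fmap hl_alpha x);
  hl_leibniz : forall (x : {ffun 'I_n -> hl_car}) (y : {ffun 'I_n.-1 -> hl_car}),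
      hl_br (fcons (hl_br x) (fmap hl_alpha y))
      = \sum_(i < n) hl_br (upd (fmap hl_alpha x) i (hl_br (fcons (x i) y)))
}.
Arguments hl_br {F n} _ _.
Arguments hl_alpha {F n} _ _.

Section HL.
Variables (F : fieldType) (n : nat).

Definition hl_hom (A B : hlalg F n) (f : A -> B) : Prop :=
  [/\ forall (a : F) (u v : A), f (a *: u + v) = a *: f u + f v,
      forall x : {ffun 'I_n -> A}, f (hl_br A x) = hl_br B (fmap f x)
    & forall u : A, f (hl_alpha A u) = hl_alpha B (f u)].

Definition in_center (A : hlalg F n) (z : A) : Prop :=
  forall (x : {ffun 'I_n -> A}) (i : 'I_n), hl_br A (upd x i z) = 0.

(* central extension pi : K -> L (kernel M = ker pi) *)
Definition central_ext (K L : hlalg F n) (pi : K -> L) : Prop :=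
  [/\ hl_hom pi, forall l : L, exists k : K, pi k = l
    & forall k : K, pi k = 0 -> in_center k].

Definition universal_central_ext (K L : hlalg F n) (pi : K -> L) : Prop :=
  central_ext pi /\
  forall (K' : hlalg F n) (pi' : K' -> L), central_ext pi' ->
    (exists h : K -> K', hl_hom h /\ forall x, pi' (h x) = pi x) /\
    (forall h1 h2 : K -> K',
        hl_hom h1 -> (forall x, pi' (h1 x) = pi x) ->
        hl_hom h2 -> (forall x, pi' (h2 x) = pi x) ->
        forall x, h1 x = h2 x).

(* Elements of the tensor power A^{(x)m} are represented by formal sums
   sum_j c_j x^j_1 (x) ... (x) x^j_m, i.e. lists of (c_j, x^j). *)
Definition fsum (A : lmodType F) (m : nat) := seq (F * {ffun 'I_m -> A}).

Definition fsum_eval (A V : lmodType F) (m : nat)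
  (phi : {ffun 'I_m -> A} -> V) (s : fsum A m) : V :=
  \sum_(p <- s) p.1 *: phi p.2.

(* s represents 0 in A^{(x)m}: killed by every m-linear map (universal
   property of the tensor product) *)
Definition tensor_zero (A : lmodType F) (m : nat) (s : fsum A m) : Prop :=
  forall (V : lmodType F) (phi : {ffun 'I_m -> A} -> V),
    multilinear phi -> fsum_eval phi s = 0.

Definition fsum_sub (A : lmodType F) (m : nat) (s t : fsum A m) : fsum A m :=
  s ++ [seq (- q.1, q.2) | q <- t].

Definition delta1 (K : hlalg F n) (s : fsum K n) : K := fsum_eval (hl_br K) s.

(* delta_2 on a generator x_1 (x) ... (x) x_n (x) y_1 (x) ... (x) y_{n-1}
   of K^{(x)(2n-1)} *)
Definition delta2_gen (K : hlalg F n)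
  (xy : {ffun 'I_n -> K} * {ffun 'I_n.-1 -> K}) : fsum K n :=
  (1, fcons (hl_br K xy.1) (fmap (hl_alpha K) xy.2)) ::
  [seq (-1, upd (fmap (hl_alpha K) xy.1) i (hl_br K (fcons (xy.1 i) xy.2)))
  | i <- enum 'I_n].

Definition delta2 (K : hlalg F n)
  (u : seq (F * ({ffun 'I_n -> K} * {ffun 'I_n.-1 -> K}))) : fsum K n :=
  flatten [seq [seq (p.1 * q.1, q.2) | q <- delta2_gen p.2] | p <- u].

(* nHL_0(K) = K / [K,...,K] = 0 : every element lies in the span of brackets *)
Definition HL0_zero (K : hlalg F n) : Prop :=
  forall z : K, exists s : fsum K n, z = delta1 s.

(* nHL_1(K) = ker delta1 / im delta2 = 0 *)
Definition HL1_zero (K : hlalg F n) : Prop :=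
  forall s : fsum K n, delta1 s = 0 ->
    exists u, tensor_zero (fsum_sub s (delta2 u)).

End HL.

(* Given a central extension pi' : K' -> L, lift pi along pi' by choosing
   any set-theoretic section sig of pi' over pi and bracketing lifts,
   [k_1, ..., k_n] |-> [sig k_1, ..., sig k_n].  Since ker pi' is central,
   a bracket in K' only depends on the pi'-images of its entries, so this map
   is multilinear and, by the Hom-Leibniz identity of K', it kills im delta_2.
   As nHL_1(K) = 0 it factors through delta_1, and as nHL_0(K) = 0 (K is
   perfect) this defines a homomorphism K -> K' on all of K.  Uniqueness: two
   lifts agree on brackets, again because only pi'-images matter, hence
   everywhere since K is perfect. *)
From HB Require Import structures.
From mathcomp Require Import all_boot all_order all_algebra.
Set Implicit Arguments.
Unset Strict Implicit.
Unset Printing Implicit Defensive.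
Import GRing.Theory.
Local Open Scope ring_scope.

Section FormalSums.
Variable F : fieldType.

Definition linear_of (U V : lmodType F) (f : U -> V) (fL : linear f)
  : {linear U -> V} := HB.pack f (GRing.isLinear.Build F U V *:%R f fL).

Lemma linear_ofE (U V : lmodType F) (f : U -> V) (fL : linear f) :
  linear_of fL =1 f.
Proof. by []. Qed.

Lemma linear_fsum_eval (A U V : lmodType F) m (phi : {ffun 'I_m -> A} -> U)
    (f : U -> V) (s : fsum A m) :
  linear f -> f (fsum_eval phi s) = fsum_eval (f \o phi) s.
Proof.
move=> fL; rewrite -(linear_ofE fL) linear_sum.
by apply: eq_bigr => p _; rewrite linearZ.
Qed.

Lemma fsum_eval_sub (A V : lmodType F) m (phi : {ffun 'I_m -> A} -> V) s t :
  fsum_eval phi (fsum_sub s t) = fsum_eval phi s - fsum_eval phi t.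
Proof.
rewrite /fsum_eval big_cat big_map -sumrN.
by congr (_ + _); apply: eq_bigr => q _; rewrite scaleNr.
Qed.

Lemma fsum_eval_scale_cat (A V : lmodType F) m (phi : {ffun 'I_m -> A} -> V)
    a s t :
  fsum_eval phi ([seq (a * q.1, q.2) | q <- s] ++ t)
  = a *: fsum_eval phi s + fsum_eval phi t.
Proof.
rewrite /fsum_eval big_cat big_map scaler_sumr; congr (_ + _).
by apply: eq_bigr => q _; rewrite scalerA.
Qed.

Lemma fsum_eval_delta2 n (K : hlalg F n) (V : lmodType F)
    (phi : {ffun 'I_n -> K} -> V) u :
  fsum_eval phi (delta2 u) = \sum_(p <- u) p.1 *: fsum_eval phi (delta2_gen p.2).
Proof.
rewrite /delta2 /fsum_eval big_flatten big_map; apply: eq_bigr => p _.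
rewrite big_map scaler_sumr; apply: eq_bigr => q _.
by rewrite scalerA.
Qed.

End FormalSums.

Section Tuples.
Variables (U V : Type) (m : nat).

Lemma fmapE (f : U -> V) (x : {ffun 'I_m -> U}) j : fmap f x j = f (x j).
Proof. by rewrite ffunE. Qed.

Lemma fmap_upd (f : U -> V) (x : {ffun 'I_m -> U}) i v :
  fmap f (upd x i v) = upd (fmap f x) i (f v).
Proof. by apply/ffunP => j; rewrite !ffunE; case: eqP. Qed.

Lemma fmap_fcons (f : U -> V) a (y : {ffun 'I_m.-1 -> U}) :
  fmap f (fcons a y) = fcons (f a) (fmap f y).
Proof.
apply/ffunP => -[[|k] Hk]; rewrite !ffunE //=.
by case: insubP => [j _ _|_] //=; rewrite ffunE.
Qed.

End Tuples.

Section Homomorphisms.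
Variables (F : fieldType) (n : nat) (A B : hlalg F n) (f : A -> B).
Hypothesis f_hom : hl_hom f.

Lemma hl_hom_linear : linear f.
Proof. by case: f_hom. Qed.

Lemma hl_hom_br x : f (hl_br A x) = hl_br B (fmap f x).
Proof. by case: f_hom. Qed.

Lemma hl_hom_fmap_alpha m (x : {ffun 'I_m -> A}) :
  fmap f (fmap (hl_alpha A) x) = fmap (hl_alpha B) (fmap f x).
Proof.
by case: f_hom => _ _ f_alpha; apply/ffunP => j; rewrite !ffunE f_alpha.
Qed.

Lemma hl_hom_delta1 s : f (delta1 s) = fsum_eval (fun x => hl_br B (fmap f x)) s.
Proof.
rewrite /delta1 (linear_fsum_eval _ _ hl_hom_linear).
by apply: eq_bigr => p _; rewrite /= hl_hom_br.
Qed.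

End Homomorphisms.

Section CentralKernel.
Variables (F : fieldType) (n : nat) (K : hlalg F n) (V : lmodType F) (p : K -> V).
Hypotheses (p_lin : linear p) (p_central : forall k, p k = 0 -> in_center k).

Lemma br_upd_congr (x : {ffun 'I_n -> K}) i v :
  p v = p (x i) -> hl_br K (upd x i v) = hl_br K x.
Proof.
move=> pv; have xE : upd x i (1 *: v + (x i - v)) = x.
  by apply/ffunP => j; rewrite ffunE scale1r addrC subrK; case: eqP => [->|].
have kill : hl_br K (upd x i (x i - v)) = 0.
  by apply: p_central; rewrite -(linear_ofE p_lin) linearB /= pv subrr.
by rewrite -{2}xE hl_br_lin scale1r kill addr0.
Qed.

Lemma br_congr (a b : {ffun 'I_n -> K}) :
  fmap p a = fmap p b -> hl_br K a = hl_br K b.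
Proof.
move=> pab; have pabj j : p (a j) = p (b j) by rewrite -(fmapE p a) pab fmapE.
pose w (r : seq 'I_n) := [ffun j => if j \in r then b j else a j].
suff brw r : hl_br K (w r) = hl_br K a.
  rewrite -(brw (enum 'I_n)); congr (hl_br K _).
  by apply/ffunP => j; rewrite ffunE mem_enum.
elim: r => [|i r IH]; first by congr (hl_br K _); apply/ffunP => j; rewrite ffunE.
rewrite -IH -(br_upd_congr (x := w r) (i := i) (v := b i)); last first.
  by rewrite ffunE; case: (i \in r).
by congr (hl_br K _); apply/ffunP => j; rewrite !ffunE inE; case: eqP => [->|].
Qed.

Lemma perfect_hom_eq (A : hlalg F n) (h1 h2 : A -> K) :
  HL0_zero A -> hl_hom h1 -> hl_hom h2 -> (forall a, p (h1 a) = p (h2 a)) ->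
  h1 =1 h2.
Proof.
move=> A_perfect h1_hom h2_hom ph12 a; have [s ->] := A_perfect a.
rewrite (hl_hom_delta1 h1_hom) (hl_hom_delta1 h2_hom); apply: eq_bigr => q _.
by congr (_ *: _); apply: br_congr; apply/ffunP => j; rewrite !ffunE ph12.
Qed.

End CentralKernel.

Section Lift.
Variables (F : fieldType) (n : nat) (K L K' : hlalg F n).
Variables (pi : K -> L) (pi' : K' -> L) (sig : K -> K').
Hypotheses (pi_hom : hl_hom pi) (pi'_hom : hl_hom pi').
Hypothesis pi'_central : forall k, pi' k = 0 -> in_center k.
Hypothesis sigK : forall k, pi' (sig k) = pi k.

Definition lift_br (x : {ffun 'I_n -> K}) : K' := hl_br K' (fmap sig x).

Lemma fmap_sigK m (x : {ffun 'I_m -> K}) : fmap pi' (fmap sig x) = fmap pi x.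
Proof. by apply/ffunP => j; rewrite !ffunE sigK. Qed.

Lemma lift_brE (y : {ffun 'I_n -> K'}) x :
  fmap pi' y = fmap pi x -> hl_br K' y = lift_br x.
Proof.
by move=> yx; apply: (br_congr (hl_hom_linear pi'_hom)) => //; rewrite fmap_sigK.
Qed.

Lemma pi'_lift_br x : pi' (lift_br x) = pi (hl_br K x).
Proof. by rewrite /lift_br !hl_hom_br // fmap_sigK. Qed.

Lemma lift_br_multilinear : multilinear lift_br.
Proof.
move=> x i a u v; rewrite {2 3}/lift_br !fmap_upd -hl_br_lin.
symmetry; apply: lift_brE; rewrite !fmap_upd fmap_sigK.
by rewrite (hl_hom_linear pi'_hom) (hl_hom_linear pi_hom) !sigK.
Qed.

Lemma alpha_lift_br x : hl_alpha K' (lift_br x) = lift_br (fmap (hl_alpha K) x).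
Proof.
rewrite /lift_br hl_alpha_br; apply: lift_brE.
by rewrite (hl_hom_fmap_alpha pi'_hom) (hl_hom_fmap_alpha pi_hom) fmap_sigK.
Qed.

Lemma lift_br_delta2_gen xy : fsum_eval lift_br (delta2_gen xy) = 0.
Proof.
case: xy => x y; rewrite /fsum_eval /delta2_gen big_cons big_map big_enum /= scale1r.
pose x' := fmap sig x; pose y' := fmap sig y.
rewrite -(lift_brE (y := fcons (hl_br K' x') (fmap (hl_alpha K') y'))); last first.
  rewrite !fmap_fcons (hl_hom_br pi'_hom) (hl_hom_br pi_hom).
  by rewrite (hl_hom_fmap_alpha pi'_hom) (hl_hom_fmap_alpha pi_hom) !fmap_sigK.
rewrite hl_leibniz -big_split big1 // => i _.
rewrite scaleN1r; apply/eqP; rewrite subr_eq0; apply/eqP/lift_brE.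
rewrite !fmap_upd (hl_hom_fmap_alpha pi'_hom) (hl_hom_fmap_alpha pi_hom) fmap_sigK.
by rewrite (hl_hom_br pi'_hom) (hl_hom_br pi_hom) !fmap_fcons fmap_sigK fmapE sigK.
Qed.

Lemma lift_br_delta2 u : fsum_eval lift_br (delta2 u) = 0.
Proof.
by rewrite fsum_eval_delta2 big1 // => p _; rewrite lift_br_delta2_gen scaler0.
Qed.

Lemma lift_br_delta1_congr s t : HL1_zero K ->
  delta1 s = delta1 t -> fsum_eval lift_br s = fsum_eval lift_br t.
Proof.
move=> K_HL1 st.
have [u u0] : exists u, tensor_zero (fsum_sub (fsum_sub s t) (delta2 u)).
  apply: K_HL1; rewrite /delta1 fsum_eval_sub.
  by rewrite -/(delta1 s) -/(delta1 t) st subrr.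
move: (u0 _ _ lift_br_multilinear).
by rewrite !fsum_eval_sub lift_br_delta2 subr0 => /eqP; rewrite subr_eq0 => /eqP.
Qed.

Section Perfect.
Hypotheses (K_perfect : HL0_zero K) (K_HL1 : HL1_zero K).

Lemma delta1_presentation (k : K) : exists s, k == delta1 s.
Proof. by have [s ->] := K_perfect k; exists s. Qed.

Definition lift_hom (k : K) : K' :=
  fsum_eval lift_br (xchoose (delta1_presentation k)).

Lemma lift_hom_delta1 s : lift_hom (delta1 s) = fsum_eval lift_br s.
Proof.
apply: lift_br_delta1_congr => //; apply/esym/eqP.
exact: xchooseP (delta1_presentation (delta1 s)).
Qed.

Lemma pi'_lift_hom k : pi' (lift_hom k) = pi k.
Proof.
have [s ->] := K_perfect k.
rewrite lift_hom_delta1 (linear_fsum_eval _ _ (hl_hom_linear pi'_hom)).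
rewrite /delta1 (linear_fsum_eval _ _ (hl_hom_linear pi_hom)).
by apply: eq_bigr => q _; rewrite /= pi'_lift_br.
Qed.

Lemma lift_hom_hom : hl_hom lift_hom.
Proof.
split.
- move=> a u v; have [su ->] := K_perfect u; have [sv ->] := K_perfect v.
  rewrite /delta1 -fsum_eval_scale_cat.
  rewrite -/(delta1 _) -/(delta1 su) -/(delta1 sv) !lift_hom_delta1.
  by rewrite fsum_eval_scale_cat.
- move=> x; have -> : hl_br K x = delta1 [:: (1, x)].
    by rewrite /delta1 /fsum_eval big_seq1 scale1r.
  rewrite lift_hom_delta1 /fsum_eval big_seq1 scale1r; apply/esym/lift_brE.
  by apply/ffunP => j; rewrite !ffunE pi'_lift_hom.
- move=> u; have [s ->] := K_perfect u.
  have -> : hl_alpha K (delta1 s)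
            = delta1 [seq (q.1, fmap (hl_alpha K) q.2) | q <- s].
    rewrite /delta1 (linear_fsum_eval _ _ (@hl_alpha_lin _ _ K)) /fsum_eval big_map.
    by apply: eq_bigr => q _; rewrite /= hl_alpha_br.
  rewrite !lift_hom_delta1 (linear_fsum_eval _ _ (@hl_alpha_lin _ _ K')).
  rewrite /fsum_eval big_map.
  by apply: eq_bigr => q _; rewrite /= alpha_lift_br.
Qed.

End Perfect.

End Lift.

Lemma perfect_HL1_lift (F : fieldType) (n : nat) (K L K' : hlalg F n)
    (pi : K -> L) (pi' : K' -> L) :
  HL0_zero K -> HL1_zero K -> hl_hom pi -> central_ext pi' ->
  exists h : K -> K', hl_hom h /\ forall x, pi' (h x) = pi x.
Proof.
move=> K_perfect K_HL1 pi_hom [pi'_hom pi'_onto pi'_central].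
have lift k : exists k', pi' k' == pi k by have [k' <-] := pi'_onto (pi k); exists k'.
have sigK k : pi' (xchoose (lift k)) = pi k by apply/eqP; exact: xchooseP (lift k).
exists (lift_hom (fun k => xchoose (lift k)) K_perfect); split.
- exact: (lift_hom_hom pi_hom pi'_hom pi'_central sigK).
- exact: (pi'_lift_hom pi_hom pi'_hom pi'_central sigK).
Qed.

Theorem theorem3p11 (F : fieldType) (n : nat) (hn : (2 <= n)%N)
  (K L : hlalg F n) (pi : K -> L) :
  HL0_zero K -> HL1_zero K -> central_ext pi -> universal_central_ext pi.
Proof.
move=> K_perfect K_HL1 pi_central; split=> // K' pi' pi'_central.
have [pi_hom _ _] := pi_central; have [pi'_hom _ pi'_ker] := pi'_central.
split; first exact: perfect_HL1_lift.
move=> h1 h2 h1_hom h1_pi h2_hom h2_pi.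
apply: (perfect_hom_eq (hl_hom_linear pi'_hom) pi'_ker) => // x.
by rewrite h1_pi h2_pi.
Qed.
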